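(* For $n\ge1$ let \[ \mathbf{M}_n=\begin{bmatrix} \frac{n}{2(2n+1)} & -\frac{3}{2n(2n+1)} & 0 & \frac{3}{2n^{5}}-\frac{9H_{n-1}^{(4)}}{2n}\\ 0 & \frac{n}{2(2n+1)} & -\frac{3}{2n(2n+1)} & \frac{3}{2n^{3}}\\ 0 & 0 & \frac{n}{2(2n+1)} & \frac{3}{2n}\\ 0 & 0 & 0 & 1 \end{bmatrix}. \] Then $\lim_{N\to\infty}\mathbf{M}_1\mathbf{M}_2\cdots\mathbf{M}_N$ exists and equals \[ \begin{bmatrix}0&0&0&\zeta(6)\\0&0&0&\zeta(4)\\0&0&0&\zeta(2)\\0&0&0&1\end{bmatrix}. \]
   Context: $\zeta$ denotes the Riemann zeta function. For integers $n\ge0$ and $p\ge1$, the hyper-harmonic number is $H_n^{(p)}=\sum_{k=1}^{n}k^{-p}$ (so $H_0^{(p)}=0$). *)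

From HB Require Import structures.
From mathcomp Require Import all_boot all_order all_algebra.
From mathcomp Require Import all_classical all_reals all_analysis.
Set Implicit Arguments. Unset Strict Implicit. Unset Printing Implicit Defensive.
Import Order.TTheory GRing.Theory Num.Theory.
Import numFieldNormedType.Exports.
Local Open Scope ring_scope.

Definition hyperH {R : realType} (n p : nat) : R :=
  \sum_(1 <= k < n.+1) ((k%:R : R) ^- p).

Definition zeta {R : realType} (s : nat) : R :=
  limn (fun N : nat => \sum_(1 <= k < N) ((k%:R : R) ^- s)).

Definition Mentry {R : realType} (n : nat) (i j : nat) : R :=
  let nr : R := n%:R in
  let d : R := nr / (2 * (2 * nr + 1)) in
  let o : R := - (3 / (2 * nr * (2 * nr + 1))) in
  match i, j with
  | 0, 0 | 1, 1 | 2, 2 => d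
  | 0, 1 | 1, 2 => o
  | 0, 3 => 3 / (2 * nr ^+ 5) - 9 * hyperH (n.-1) 4 / (2 * nr)
  | 1, 3 => 3 / (2 * nr ^+ 3)
  | 2, 3 => 3 / (2 * nr)
  | 3, 3 => 1
  | _, _ => 0
  end.

Definition Mmat {R : realType} (n : nat) : 'M[R]_4 :=
  \matrix_(i < 4, j < 4) Mentry n i j.

Definition Zentry {R : realType} (i j : nat) : R :=
  match i, j with
  | 0, 3 => zeta 6
  | 1, 3 => zeta 4
  | 2, 3 => zeta 2
  | 3, 3 => 1
  | _, _ => 0
  end.

Definition Zmat {R : realType} : 'M[R]_4 := \matrix_(i < 4, j < 4) Zentry i j.

From HB Require Import structures.
From mathcomp Require Import all_boot all_order all_algebra.
From mathcomp Require Import all_classical all_reals all_analysis.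
From mathcomp Require Import ring lra.
Import Order.TTheory GRing.Theory Num.Theory.
Import numFieldNormedType.Exports.
Local Open Scope classical_set_scope.
Local Open Scope ring_scope.
Set Implicit Arguments. Unset Strict Implicit. Unset Printing Implicit Defensive.

(* The upper-left 3x3 block of M_n is upper triangular Toeplitz, i.e. it is
   multiplication by an element a_n of the truncated polynomial ring R[y]/(y^3),
   and its last column is another element c_n of that ring.  Hence M_1...M_N
   has block A_N = a_1...a_N, which tends to 0 because every a_n has norm at
   most 2/3, and last column V_N = sum_(n<N) A_n c_(n+1).  The target column is
   sum_(k>=1) 1/(k^2 - y) = zeta(2) + zeta(4) y + zeta(6) y^2.

   The terms A_n c_(n+1) are G(n,1) for the Wilf-Zeilberger pair
     F(n,k) = prod_(j<n) (j+1)((j+1)^2 - 4y)/(2(2j+1)) * prod_(j<=n) 1/((k+j)^2 - y),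
     G(n,k) = (k + (3n+1)/2)/(2n+1) * F(n,k),
   which satisfies F(n,k) - F(n+1,k) = G(n,k) - G(n,k+1).  Summing over n < N
   and 1 <= k <= K gives
     V_N = sum_(k<=K) F(0,k) - sum_(k<=K) F(N,k) + sum_(n<N) G(n,K+1).
   As K -> oo the last sum is O(1/K) and the first tends to the target, while
   sum_(k<=K) F(N,k) = O((8/9)^N) uniformly in K. *)

Record trunc3 (R : Type) := Trunc3 { c0 : R; c1 : R; c2 : R }.

Definition trunc3_tuple (R : Type) (a : trunc3 R) := (c0 a, c1 a, c2 a).
Definition tuple_trunc3 (R : Type) (p : R * R * R) := Trunc3 p.1.1 p.1.2 p.2.
Lemma trunc3_tupleK (R : Type) : cancel (@trunc3_tuple R) (@tuple_trunc3 R).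
Proof. by case. Qed.

HB.instance Definition _ (R : choiceType) :=
  Choice.copy (trunc3 R) (can_type (@trunc3_tupleK R)).

Section Trunc3Ring.
Variable R : comNzRingType.
Local Notation T := (trunc3 R).

Lemma trunc3_eq (a b : T) : c0 a = c0 b -> c1 a = c1 b -> c2 a = c2 b -> a = b.
Proof. by case: a b => ? ? ? [? ? ?] /= -> -> ->. Qed.

Definition tadd (a b : T) := Trunc3 (c0 a + c0 b) (c1 a + c1 b) (c2 a + c2 b).
Definition topp (a : T) := Trunc3 (- c0 a) (- c1 a) (- c2 a).
Definition tmul (a b : T) := Trunc3 (c0 a * c0 b) (c0 a * c1 b + c1 a * c0 b)
  (c0 a * c2 b + c1 a * c1 b + c2 a * c0 b).

Lemma taddA : associative tadd.
Proof. by move=> *; apply: trunc3_eq => /=; ring. Qed.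
Lemma taddC : commutative tadd.
Proof. by move=> *; apply: trunc3_eq => /=; ring. Qed.
Lemma tadd0 : left_id (Trunc3 0 0 0) tadd.
Proof. by move=> *; apply: trunc3_eq => /=; ring. Qed.
Lemma taddN : left_inverse (Trunc3 0 0 0) topp tadd.
Proof. by move=> *; apply: trunc3_eq => /=; ring. Qed.

HB.instance Definition _ := GRing.isZmodule.Build T taddA taddC tadd0 taddN.

Lemma tmulA : associative tmul.
Proof. by move=> *; apply: trunc3_eq => /=; ring. Qed.
Lemma tmulC : commutative tmul.
Proof. by move=> *; apply: trunc3_eq => /=; ring. Qed.
Lemma tmul1 : left_id (Trunc3 1 0 0) tmul.
Proof. by move=> *; apply: trunc3_eq => /=; ring. Qed.
Lemma tmulDl : left_distributive tmul +%R.
Proof. by move=> *; apply: trunc3_eq => /=; ring. Qed.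
Lemma tone_neq0 : Trunc3 1 0 0 != 0 :> T.
Proof. by apply/eqP => -[/eqP]; rewrite oner_eq0. Qed.

HB.instance Definition _ := GRing.Zmodule_isComNzRing.Build T
  tmulA tmulC tmul1 tmulDl tone_neq0.

Definition tconst (r : R) : T := Trunc3 r 0 0.
Definition tX : T := Trunc3 0 1 0.

Definition tcoef (a : T) (i : nat) : R :=
  match i with 0 => c0 a | 1 => c1 a | 2 => c2 a | _ => 0 end.

Lemma tcoefD a b i : tcoef (a + b) i = tcoef a i + tcoef b i.
Proof. by case: i => [|[|[|i]]] //=; rewrite addr0. Qed.

Lemma tcoefB a b i : tcoef (a - b) i = tcoef a i - tcoef b i.
Proof. by case: i => [|[|[|i]]] //=; rewrite subr0. Qed.

Lemma tcoef_sum I (r : seq I) (P : pred I) (F : I -> T) i :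
  tcoef (\sum_(j <- r | P j) F j) i = \sum_(j <- r | P j) tcoef (F j) i.
Proof.
elim/big_rec2: _ => [|j x y _ IH]; first by case: i => [|[|[|i]]].
by rewrite tcoefD IH.
Qed.

(* The upper-left block is the matrix of multiplication by [a] on R[y]/(y^3)
   in the basis (y^2, y, 1); the last column lists the coefficients of [v]
   in that basis. *)
Definition toep_mx (a v : T) : 'M[R]_4 := \matrix_(i < 4, j < 4)
  if j == 3 :> nat then (if i == 3 :> nat then 1 else tcoef v (2 - i)%N)
  else if (i <= j)%N then tcoef a (j - i)%N else 0.

Lemma toep_mxM a v b w : toep_mx a v * toep_mx b w = toep_mx (a * b) (v + a * w).
Proof.
apply/matrixP => i j; rewrite !mxE !big_ord_recr big_ord0 /= !mxE.
by case: i => [[|[|[|[|i]]]] Hi] //; case: j => [[|[|[|[|j]]]] Hj] //=; ring.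
Qed.

Lemma toep_mx1 : toep_mx 1 0 = 1.
Proof.
apply/matrixP => i j; rewrite !mxE.
by case: i => [[|[|[|[|i]]]] Hi] //; case: j => [[|[|[|[|j]]]] Hj].
Qed.

Lemma prod_toep_mx (a v : nat -> T) m n :
  \prod_(m <= k < n) toep_mx (a k) (v k) =
  toep_mx (\prod_(m <= k < n) a k) (\sum_(m <= k < n) (\prod_(m <= j < k) a j) * v k).
Proof.
elim: n => [|n IHn]; first by rewrite !big_geq // toep_mx1.
have [mn|nm] := leqP m n; last by rewrite !big_geq // toep_mx1.
by rewrite !big_nat_recr //= IHn toep_mxM.
Qed.

End Trunc3Ring.
Arguments tX {R}.

Lemma cvg_mx_entries (I : Type) (F : set_system I) (FF : Filter F)
    (T : puniformType) m n (u : I -> 'M[T]_(m, n)) (M : 'M[T]_(m, n)) :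
  (forall i j, (fun x => u x i j) @ F --> M i j) -> u @ F --> M.
Proof.
move=> uM; apply/cvg_mx_entourageP => A entA.
have Aev : \forall x \near F,
    forall ij : 'I_m * 'I_n, (M ij.1 ij.2, u x ij.1 ij.2) \in A.
  apply: (@filter_forall _ _ (fun ij x => (M ij.1 ij.2, u x ij.1 ij.2) \in A) F FF).
  move=> [i j] /=; have /cvg_entourageP/(_ _ entA) Aij := uM i j.
  by near=> x; rewrite inE; near: x.
by apply: filterS Aev => x Ax i j; apply: (Ax (i, j)).
Unshelve. all: by end_near.
Qed.

Section WZPair.
Variable R : realType.
Local Notation T := (trunc3 R).

Lemma natr_2n1_neq0 (n : nat) : (2 * n%:R + 1 : R) != 0.
Proof. by rewrite gt_eqF // ltr_pwDr // mulr_ge0. Qed.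

Definition Mblk (n : nat) : T :=
  Trunc3 (n%:R / (2 * (2 * n%:R + 1))) (- (3 / (2 * n%:R * (2 * n%:R + 1)))) 0.

Definition Mcol (n : nat) : T :=
  Trunc3 (3 / (2 * n%:R)) (3 / (2 * n%:R ^+ 3))
    (3 / (2 * n%:R ^+ 5) - 9 * hyperH n.-1 4 / (2 * n%:R)).

Lemma Mmat_toep n : Mmat n = toep_mx (Mblk n) (Mcol n).
Proof.
apply/matrixP => i j; rewrite !mxE.
by case: i => [[|[|[|[|i]]]] Hi] //; case: j => [[|[|[|[|j]]]] Hj].
Qed.

Definition zeta_vec : T := Trunc3 (zeta 2) (zeta 4) (zeta 6).

Lemma Zmat_toep : Zmat = toep_mx 0 zeta_vec.
Proof.
apply/matrixP => i j; rewrite !mxE.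
by case: i => [[|[|[|[|i]]]] Hi] //; case: j => [[|[|[|[|j]]]] Hj].
Qed.

Definition Ablk (N : nat) : T := \prod_(1 <= n < N.+1) Mblk n.

Definition inv_sqX (a : R) : T := Trunc3 (a ^- 2) (a ^- 4) (a ^- 6).

Lemma inv_sqXK a : a != 0 -> inv_sqX a * (tconst (a ^+ 2) - tX) = 1.
Proof. by move=> a_neq0; apply: trunc3_eq => /=; field. Qed.

Definition wz_factor (n : nat) : T :=
  tconst (n.+1%:R / (2 * (2 * n%:R + 1))) * (tconst (n.+1%:R ^+ 2) - tconst 4 * tX).

Definition wz_num (n : nat) : T := \prod_(0 <= j < n) wz_factor j.

Definition wzF (n k : nat) : T := wz_num n * \prod_(k <= j < (k + n.+1)%N) inv_sqX j%:R.

Definition wzG (n k : nat) : T :=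
  tconst ((k%:R + (3 * n%:R + 1) / 2) / (2 * n%:R + 1)) * wzF n k.

Lemma wzF_rel n k : (0 < k)%N -> wzF n k - wzF n.+1 k = wzG n k - wzG n k.+1.
Proof.
move=> k_gt0.
set Q := \prod_(k <= j < (k + n.+2)%N) inv_sqX j%:R.
have Fnk : wzF n k = wz_num n * Q * (tconst ((k + n.+1)%N%:R ^+ 2) - tX).
  rewrite /Q addnS big_nat_recr ?leq_addr //= -mulrA -mulrA inv_sqXK ?mulr1 //.
have Fnk1 : wzF n k.+1 = wz_num n * Q * (tconst (k%:R ^+ 2) - tX).
  rewrite /wzF /Q [in RHS]big_ltn -?(addSnnS k n.+1) ?leq_addr //.
  transitivity (wz_num n * (inv_sqX k%:R * (tconst (k%:R ^+ 2) - tX)) *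
    \prod_(k.+1 <= j < (k.+1 + n.+1)%N) inv_sqX j%:R); last by ring.
  by rewrite inv_sqXK ?mulr1 // pnatr_eq0 -lt0n.
have Fn1k : wzF n.+1 k = wz_num n * Q * wz_factor n.
  by rewrite /wzF /wz_num big_nat_recr //= -/Q; ring.
have key : tconst ((k + n.+1)%N%:R ^+ 2) - tX - wz_factor n =
    tconst ((k%:R + (3 * n%:R + 1) / 2) / (2 * n%:R + 1)) *
      (tconst ((k + n.+1)%N%:R ^+ 2) - tX)
  - tconst ((k.+1%:R + (3 * n%:R + 1) / 2) / (2 * n%:R + 1)) *
      (tconst (k%:R ^+ 2) - tX).
  have n21 := natr_2n1_neq0 n.
  by apply: trunc3_eq => /=; rewrite natrD -!natr1; field.
rewrite /wzG Fnk Fnk1 Fn1k.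
transitivity (wz_num n * Q * (tconst ((k + n.+1)%N%:R ^+ 2) - tX - wz_factor n)).
  by ring.
by rewrite key; ring.
Qed.

Lemma hyperHS N : hyperH N.+1 4 = hyperH N 4 + (N.+1%:R : R) ^- 4.
Proof. by rewrite /hyperH big_nat_recr. Qed.

(* (n^2 - 4y)/(n^2 - y) = (1 - 3y/n^2)(1 - 3y^2/n^4) mod y^3, so the two
   products differ by prod_(j<=N) (1 - 3y^2/j^4) = 1 - 3 H_N^(4) y^2. *)
Lemma wz_num_Ablk N : wz_num N * \prod_(1 <= j < N.+1) inv_sqX j%:R =
  tconst (2 * N%:R + 1) * Ablk N * (1 - tconst (3 * hyperH N 4) * (tX * tX)).
Proof.
elim: N => [|N IHN].
  by rewrite /wz_num /Ablk /hyperH !big_geq //; apply: trunc3_eq => /=; ring.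
have key : tconst (2 * N%:R + 1) * (1 - tconst (3 * hyperH N 4) * (tX * tX)) *
    wz_factor N * inv_sqX N.+1%:R
  = tconst (2 * N.+1%:R + 1) * Mblk N.+1 *
    (1 - tconst (3 * hyperH N.+1 4) * (tX * tX)).
  have N21 := natr_2n1_neq0 N; have N23 := natr_2n1_neq0 N.+1.
  have N1 : (N.+1%:R : R) != 0 by rewrite pnatr_eq0.
  rewrite hyperHS; apply: trunc3_eq => /=; rewrite -!natr1; field;
  by rewrite natr1 N1 N21 N23.
rewrite /wz_num /Ablk (big_nat_recr N) // !(big_nat_recr N.+1) //=.
rewrite -/(wz_num N) -/(Ablk N).
transitivity (wz_num N * \prod_(1 <= j < N.+1) inv_sqX j%:R *
  (wz_factor N * inv_sqX N.+1%:R)); first by ring.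
rewrite IHN.
transitivity (Ablk N * (tconst (2 * N%:R + 1) *
  (1 - tconst (3 * hyperH N 4) * (tX * tX)) * wz_factor N * inv_sqX N.+1%:R));
  first by ring.
by rewrite key; ring.
Qed.

Lemma wzG_1 n : wzG n 1 = Ablk n * Mcol n.+1.
Proof.
have key : tconst ((1%:R + (3 * n%:R + 1) / 2) / (2 * n%:R + 1)) *
    tconst (2 * n%:R + 1) * (1 - tconst (3 * hyperH n 4) * (tX * tX)) *
    inv_sqX n.+1%:R = Mcol n.+1.
  have n21 := natr_2n1_neq0 n; have n1 : (n.+1%:R : R) != 0 by rewrite pnatr_eq0.
  apply: trunc3_eq => /=; rewrite -!natr1; field; by rewrite natr1 n1 n21.
rewrite /wzG /wzF add1n big_nat_recr //= mulrA wz_num_Ablk -key; ring.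
Qed.

Definition wzS (n K : nat) : T := \sum_(1 <= k < K.+1) wzF n k.

Lemma wzG_telescope n K : wzG n 1 - wzG n K.+1 = wzS n K - wzS n.+1 K.
Proof.
rewrite /wzS -sumrB (telescope_sumr_eq (fun k => - wzG n k)) //.
  by rewrite opprK addrC.
by move=> k /andP[k_gt0 _]; rewrite wzF_rel // opprK addrC.
Qed.

Lemma wz_col_sum N K : \sum_(0 <= n < N) wzG n 1 =
  wzS 0 K - wzS N K + \sum_(0 <= n < N) wzG n K.+1.
Proof.
transitivity (\sum_(0 <= n < N) ((wzS n K - wzS n.+1 K) + wzG n K.+1)).
  by apply: eq_bigr => n _; rewrite -wzG_telescope subrK.
rewrite big_split /= (telescope_sumr_eq (fun n => - wzS n K)) //.
  by rewrite opprK [- _ + _]addrC.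
by move=> n _; rewrite opprK addrC.
Qed.

Lemma prod_Mmat N :
  \prod_(1 <= n < N.+1) Mmat n = toep_mx (Ablk N) (\sum_(0 <= n < N) wzG n 1).
Proof.
under eq_bigr do rewrite Mmat_toep.
rewrite prod_toep_mx [X in toep_mx _ X]big_add1 /=.
by congr toep_mx; apply: eq_bigr => n _; rewrite wzG_1.
Qed.

End WZPair.
Arguments Mblk {R}. Arguments Mcol {R}. Arguments zeta_vec {R}.
Arguments Ablk {R}. Arguments wz_factor {R}. Arguments wz_num {R}.
Arguments wzF {R}. Arguments wzG {R}. Arguments wzS {R}.

Section Trunc3Norm.
Variable R : realDomainType.
Local Notation T := (trunc3 R).

Definition tnorm (a : T) : R := `|c0 a| + `|c1 a| + `|c2 a|.

Lemma tnorm_ge0 a : 0 <= tnorm a.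
Proof. by rewrite /tnorm !addr_ge0. Qed.

Lemma ler_tcoef_tnorm a i : `|tcoef a i| <= tnorm a.
Proof.
rewrite /tnorm; have := normr_ge0 (c0 a); have := normr_ge0 (c1 a).
have := normr_ge0 (c2 a); case: i => [|[|[|i]]] /=; rewrite ?normr0; lra.
Qed.

Lemma tnorm_const r : tnorm (tconst r) = `|r|.
Proof. by rewrite /tnorm /= normr0 !addr0. Qed.

Lemma tnormD a b : tnorm (a + b) <= tnorm a + tnorm b.
Proof.
rewrite /tnorm /=; have := ler_normD (c0 a) (c0 b).
have := ler_normD (c1 a) (c1 b); have := ler_normD (c2 a) (c2 b); lra.
Qed.

Lemma tnormM a b : tnorm (a * b) <= tnorm a * tnorm b.
Proof.
rewrite /tnorm /=.
have h1 := ler_normD (c0 a * c1 b) (c1 a * c0 b).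
have h2 := ler_normD (c0 a * c2 b + c1 a * c1 b) (c2 a * c0 b).
have h3 := ler_normD (c0 a * c2 b) (c1 a * c1 b).
rewrite !normrM in h1 h2 h3 *.
have a0 := normr_ge0 (c0 a); have a1 := normr_ge0 (c1 a).
have a2 := normr_ge0 (c2 a); have b0 := normr_ge0 (c0 b).
have b1 := normr_ge0 (c1 b); have b2 := normr_ge0 (c2 b).
nra.
Qed.

Lemma tnorm_sum I (r : seq I) (P : pred I) (F : I -> T) :
  tnorm (\sum_(i <- r | P i) F i) <= \sum_(i <- r | P i) tnorm (F i).
Proof.
elim/big_rec2: _ => [|i x y _ IH]; first by rewrite /tnorm /= normr0 !addr0.
by apply: le_trans (tnormD _ _) _; rewrite lerD2l.
Qed.

Lemma tnorm_prod I (r : seq I) (P : pred I) (F : I -> T) :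
  tnorm (\prod_(i <- r | P i) F i) <= \prod_(i <- r | P i) tnorm (F i).
Proof.
elim/big_rec2: _ => [|i x y _ IH]; first by rewrite /tnorm /= normr1 normr0 !addr0.
by apply: le_trans (tnormM _ _) _; rewrite ler_wpM2l ?tnorm_ge0.
Qed.

End Trunc3Norm.

Section WZBounds.
Variable R : realType.
Local Notation T := (trunc3 R).

Lemma tnorm_inv_sqX (a : R) : 1 <= a -> tnorm (inv_sqX a) <= 3 / a ^+ 2.
Proof.
move=> a_ge1; have a_gt0 : 0 < a by lra.
have p2 : 0 <= a ^- 2 by rewrite invr_ge0 exprn_ge0 // ltW.
have p4 : 0 <= a ^- 4 by rewrite invr_ge0 exprn_ge0 // ltW.
have p6 : 0 <= a ^- 6 by rewrite invr_ge0 exprn_ge0 // ltW.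
have h4 : a ^- 4 <= a ^- 2 by rewrite lef_pV2 ?posrE ?exprn_gt0 // ler_weXn2l.
have h6 : a ^- 6 <= a ^- 2 by rewrite lef_pV2 ?posrE ?exprn_gt0 // ler_weXn2l.
rewrite /tnorm /= (ger0_norm p2) (ger0_norm p4) (ger0_norm p6); lra.
Qed.

Lemma tnorm_Mblk n : (0 < n)%N -> tnorm (Mblk n : T) <= 2 / 3.
Proof.
move=> n_gt0; have x_ge1 : (1 : R) <= n%:R by rewrite ler1n.
rewrite /tnorm /Mblk /= normr0 addr0 normrN.
rewrite !ger0_norm ?divr_ge0 ?mulr_ge0 ?addr_ge0 //.
set x := n%:R in x_ge1 *.
have -> : x / (2 * (2 * x + 1)) + 3 / (2 * x * (2 * x + 1)) =
    (x ^+ 2 + 3) / (2 * x * (2 * x + 1)).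
  by field; apply/andP; split; apply/negP => /eqP; lra.
rewrite ler_pdivrMr; last by apply: mulr_gt0; [apply: mulr_gt0|]; lra.
nra.
Qed.

Lemma tnorm_Ablk N : tnorm (Ablk N : T) <= (2 / 3) ^+ N.
Proof.
apply: le_trans (tnorm_prod _ _ _) _.
rewrite (_ : (2 / 3) ^+ N = \prod_(1 <= n < N.+1) (2 / 3 : R)); last first.
  by rewrite prodr_const_nat subn1.
rewrite [X in X <= _]big_nat_cond [X in _ <= X]big_nat_cond.
apply: ler_prod => n /andP[/andP[n_gt0 _] _].
by rewrite tnorm_ge0 tnorm_Mblk.
Qed.

Definition wz_ratio (j : nat) : R :=
  j.+1%:R * (j.+1%:R ^+ 2 + 4) / (2 * (2 * j%:R + 1)) * (3 / j.+2%:R ^+ 2).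

Lemma wz_ratio_ge0 j : 0 <= wz_ratio j.
Proof. by rewrite /wz_ratio !(mulr_ge0, divr_ge0, addr_ge0, exprn_ge0). Qed.

Lemma wz_ratio_le j : (0 < j)%N -> wz_ratio j <= 8 / 9.
Proof.
move=> j_gt0; have x_ge1 : (1 : R) <= j%:R by rewrite ler1n.
have e1 : (j.+1%:R : R) = j%:R + 1 by rewrite natr1.
have e2 : (j.+2%:R : R) = j%:R + 2 by rewrite -natr1 e1; lra.
rewrite /wz_ratio e1 e2; set x := j%:R in x_ge1 *.
have -> : (x + 1) * ((x + 1) ^+ 2 + 4) / (2 * (2 * x + 1)) * (3 / (x + 2) ^+ 2)
   = 3 * ((x + 1) * ((x + 1) ^+ 2 + 4)) / (2 * (2 * x + 1) * (x + 2) ^+ 2).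
  by field; apply/andP; split; apply/negP => /eqP; lra.
rewrite ler_pdivrMr; last first.
  by apply: mulr_gt0; [apply: mulr_gt0; lra | apply: exprn_gt0; lra].
have h : 0 <= (x - 1) * (5 * x ^+ 2 + 68 * x + 71).
  by apply: mulr_ge0; [lra | rewrite expr2; nra].
rewrite !expr2 in h *; nra.
Qed.

Lemma prod_wz_ratio_le n : \prod_(0 <= j < n) wz_ratio j <= 3 * (8 / 9) ^+ n.
Proof.
case: n => [|n]; first by rewrite big_geq // expr0; lra.
rewrite big_ltn // exprS mulrA.
have -> : wz_ratio 0 = 15 / 8 by rewrite /wz_ratio /= ?expr2; field.
apply: ler_pM; [lra | by apply: prodr_ge0 => j _; apply: wz_ratio_ge0 | lra |].
rewrite (_ : (8 / 9) ^+ n = \prod_(1 <= j < n.+1) (8 / 9 : R)); last first.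
  by rewrite prodr_const_nat subn1.
rewrite [X in X <= _]big_nat_cond [X in _ <= X]big_nat_cond.
by apply: ler_prod => j /andP[/andP[j_gt0 _] _]; rewrite wz_ratio_ge0 wz_ratio_le.
Qed.

Lemma tnorm_wz_factor_inv_sqX j m : (j.+2 <= m)%N ->
  tnorm (wz_factor j * inv_sqX m%:R) <= wz_ratio j.
Proof.
move=> jm; apply: le_trans (tnormM _ _) _.
have -> : tnorm (wz_factor j : T) =
    j.+1%:R * (j.+1%:R ^+ 2 + 4) / (2 * (2 * j%:R + 1)).
  rewrite /tnorm /= !(mulr0, mul0r, addr0, add0r, subr0, sub0r, mulr1) oppr0.
  rewrite mulr0 normr0 addr0 !normrM normrN.
  by rewrite !ger0_norm ?(invr_ge0, mulr_ge0, addr_ge0, exprn_ge0, ler0n) //; ring.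
rewrite /wz_ratio ler_wpM2l ?divr_ge0 ?mulr_ge0 ?addr_ge0 ?exprn_ge0 //.
have m_ge : (j.+2%:R : R) <= m%:R by rewrite ler_nat.
apply: le_trans (tnorm_inv_sqX _) _; first by apply: le_trans m_ge; rewrite ler1n.
rewrite ler_pM2l // lef_pV2 ?posrE ?exprn_gt0 ?ltr0Sn //; last first.
  exact: lt_le_trans m_ge.
by rewrite ler_pXn2r // ?nnegrE ?ler0n.
Qed.

Lemma wzF_split n k : (wzF n k : T) =
  inv_sqX k%:R * \prod_(0 <= j < n) (wz_factor j * inv_sqX (j + k.+1)%N%:R).
Proof.
rewrite /wzF /wz_num [X in _ * X = _]big_ltn; last by rewrite addnS ltnS leq_addr.
rewrite (big_addn 0 _ k.+1).
rewrite -addSnnS addKn [in RHS]big_split /=; ring.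
Qed.

Lemma tnorm_wzF n k : (0 < k)%N -> tnorm (wzF n k : T) <= 9 * (8 / 9) ^+ n / k%:R ^+ 2.
Proof.
move=> k_gt0; rewrite wzF_split; apply: le_trans (tnormM _ _) _.
have k_ge1 : (1 : R) <= k%:R by rewrite ler1n.
have -> : 9 * (8 / 9) ^+ n / k%:R ^+ 2 = 3 / k%:R ^+ 2 * (3 * (8 / 9) ^+ n) :> R.
  by ring.
apply: ler_pM; [exact: tnorm_ge0 | exact: tnorm_ge0 | exact: tnorm_inv_sqX |].
apply: le_trans (tnorm_prod _ _ _) (le_trans _ (prod_wz_ratio_le n)).
apply: ler_prod => j _; rewrite tnorm_ge0 tnorm_wz_factor_inv_sqX //.
by rewrite addnS ltnS -addn1 leq_add2l.
Qed.

Lemma inv_sqr_le_telescope k : (0 < k)%N ->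
  (k%:R : R) ^- 2 <= 2 / k%:R - 2 / k.+1%:R.
Proof.
move=> k_gt0; have x_ge1 : (1 : R) <= k%:R by rewrite ler1n.
rewrite -subr_ge0 -(natr1 k); set x := k%:R in x_ge1 *.
have -> : 2 / x - 2 / (x + 1) - x ^- 2 = (x - 1) / (x ^+ 2 * (x + 1)).
  by field; apply/andP; split; apply/negP => /eqP; lra.
by apply: divr_ge0; [lra | apply: mulr_ge0; [apply: exprn_ge0|]; lra].
Qed.

Lemma sum_inv_sqr_le K : \sum_(1 <= k < K.+1) (k%:R : R) ^- 2 <= 2.
Proof.
apply: (@le_trans _ _ (\sum_(1 <= k < K.+1) (2 / k%:R - 2 / k.+1%:R))).
  by apply: ler_sum_nat => k /andP[k_gt0 _]; apply: inv_sqr_le_telescope.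
rewrite (telescope_sumr_eq (fun k => - (2 / k%:R))) //.
  by rewrite opprK divr1 addrC lerBlDr lerDl divr_ge0.
by move=> k _; rewrite opprK addrC.
Qed.

Lemma tnorm_wzS n K : tnorm (wzS n K : T) <= 18 * (8 / 9) ^+ n.
Proof.
apply: le_trans (tnorm_sum _ _ _) _.
apply: (@le_trans _ _ (\sum_(1 <= k < K.+1) 9 * (8 / 9) ^+ n * (k%:R : R) ^- 2)).
  by apply: ler_sum_nat => k /andP[k_gt0 _]; apply: tnorm_wzF.
rewrite -mulr_sumr (_ : 18 * _ = 9 * (8 / 9) ^+ n * 2); last by ring.
by rewrite ler_wpM2l ?mulr_ge0 ?exprn_ge0 ?divr_ge0 ?sum_inv_sqr_le.
Qed.

Lemma tnorm_wzG n k : (0 < k)%N -> tnorm (wzG n k : T) <= 18 * n.+1%:R / k%:R.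
Proof.
move=> k_gt0; rewrite /wzG; apply: le_trans (tnormM _ _) _; rewrite tnorm_const.
have y_ge1 : (1 : R) <= k%:R by rewrite ler1n.
have x_ge0 : (0 : R) <= n%:R by [].
have n21 : (0 : R) < 2 * n%:R + 1 by rewrite ltr_pwDr // mulr_ge0.
set x := n%:R in x_ge0 n21 *; set y := k%:R in y_ge1 *.
have c_ge0 : 0 <= (y + (3 * x + 1) / 2) / (2 * x + 1).
  by apply: divr_ge0; lra.
have c_le : (y + (3 * x + 1) / 2) / (2 * x + 1) <= 2 * (x + 1) * y.
  rewrite ler_pdivrMr //; nra.
have F_le : tnorm (wzF n k : T) <= 9 / y ^+ 2.
  apply: le_trans (tnorm_wzF _ k_gt0) _.
  rewrite -/y ler_pM2r ?invr_gt0 ?exprn_gt0 ?ler_piMr ?exprn_ile1 //; lra.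
rewrite ger0_norm // -(natr1 n) -/x.
apply: le_trans (ler_pM c_ge0 (tnorm_ge0 _) c_le F_le) _.
rewrite le_eqVlt; apply/orP; left; apply/eqP; field; lra.
Qed.

End WZBounds.

Lemma cvg_toep_mx (R : numFieldType) (a v : nat -> trunc3 R) (b w : trunc3 R) :
  (forall i, (fun N => tcoef (a N) i) @ \oo --> tcoef b i) ->
  (forall i, (fun N => tcoef (v N) i) @ \oo --> tcoef w i) ->
  (fun N => toep_mx (a N) (v N)) @ \oo --> toep_mx b w.
Proof.
move=> ab vw; apply: cvg_mx_entries => i j; rewrite mxE.
under eq_fun do rewrite mxE.
case: ifP => _; first by case: ifP => _; [exact: cvg_cst | exact: vw].
by case: ifP => _; [exact: ab | exact: cvg_cst].
Qed.

Lemma dist_le_cvg (R : realType) (u b : nat -> R) (l : R) :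
  b @ \oo --> 0 -> (forall n, `|l - u n| <= b n) -> u @ \oo --> l.
Proof.
move=> b0 ub; apply/cvgrPdist_le => e e_gt0.
near=> n; apply: le_trans (ub n) _; apply: le_trans (ler_norm (b n)) _.
by near: n; apply: cvgr0_norm_le.
Unshelve. all: by end_near.
Qed.

Lemma cvg_zeta (R : realType) s : (2 <= s)%N ->
  (fun K => \sum_(1 <= k < K.+1) (k%:R : R) ^- s) @ \oo --> zeta s.
Proof.
move=> s_ge2; pose u K := \sum_(1 <= k < K) (k%:R : R) ^- s.
have u_cvg : cvgn u.
  apply: nondecreasing_is_cvgn.
    apply: (@nondecreasing_series R (fun k => (k%:R : R) ^- s) xpredT 1).
    by move=> n _ _; rewrite invr_ge0 exprn_ge0.
  exists 2 => _ [[|K] _ <-]; rewrite /u; first by rewrite big_geq.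
  apply: le_trans (sum_inv_sqr_le R K).
  apply: ler_sum_nat => k /andP[k_gt0 _]; have k_ge1 : (1 : R) <= k%:R by rewrite ler1n.
  by rewrite lef_pV2 ?posrE ?exprn_gt0 ?ler_weXn2l //; lra.
by have : u @ \oo --> limn u := u_cvg; rewrite -cvg_shiftS.
Qed.

Section Convergence.
Variable R : realType.
Local Notation T := (trunc3 R).

Lemma cvg_tcoef_Ablk i : (fun N => tcoef (Ablk N : T) i) @ \oo --> tcoef (0 : T) i.
Proof.
have -> : tcoef (0 : T) i = 0 by case: i => [|[|[|i]]].
apply: (dist_le_cvg (b := geometric 1 (2 / 3))).
  by apply: cvg_geometric; rewrite ger0_norm; lra.
move=> N; rewrite sub0r normrN /= mul1r.
exact: le_trans (ler_tcoef_tnorm _ _) (tnorm_Ablk R N).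
Qed.

Lemma cvg_tcoef_wzS0 i : (fun K => tcoef (wzS 0 K : T) i) @ \oo --> tcoef zeta_vec i.
Proof.
have wzF0 k : wzF 0 k = inv_sqX k%:R :> T.
  by rewrite /wzF /wz_num big_geq // mul1r addn1 big_nat1.
have -> : (fun K => tcoef (wzS 0 K : T) i) =
    (fun K => \sum_(1 <= k < K.+1) tcoef (inv_sqX k%:R : T) i).
  by apply: funext => K; rewrite tcoef_sum; apply: eq_bigr => k _; rewrite wzF0.
case: i => [|[|[|i]]] /=; try exact: cvg_zeta.
under eq_fun do rewrite big1_eq; exact: cvg_cst.
Qed.

Lemma tcoef_col_dist N i :
  `|tcoef zeta_vec i - tcoef (\sum_(0 <= n < N) wzG n 1 : T) i| <=
  18 * (8 / 9) ^+ N.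
Proof.
set V : T := \sum_(0 <= n < N) wzG n 1.
pose E K : T := \sum_(0 <= n < N) wzG n K.+1.
pose D : R := \sum_(0 <= n < N) 18 * n.+1%:R.
have E_cvg : (fun K => tcoef (E K) i) @ \oo --> 0.
  apply: (dist_le_cvg (b := fun K => D * harmonic K)).
    by rewrite -(mulr0 D); apply: cvgMl_tmp; apply: cvg_harmonic.
  move=> K; rewrite sub0r normrN; apply: le_trans (ler_tcoef_tnorm _ _) _.
  apply: le_trans (tnorm_sum _ _ _) _; rewrite /D /= mulr_suml.
  by apply: ler_sum_nat => n _; apply: tnorm_wzG.
have SN_cvg :
    (fun K => tcoef (wzS N K : T) i) @ \oo --> tcoef zeta_vec i - tcoef V i.
  have -> : (fun K => tcoef (wzS N K : T) i) =
      (fun K => tcoef (wzS 0 K : T) i + tcoef (E K) i - tcoef V i).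
    by apply: funext => K; rewrite /V (wz_col_sum _ N K) tcoefD tcoefB; ring.
  rewrite -[X in _ --> X]addr0 addrAC.
  by apply: cvgB; [apply: cvgD; [exact: cvg_tcoef_wzS0 | exact: E_cvg] |
    exact: cvg_cst].
apply: (cvgr_to_le (cvg_norm SN_cvg)); apply: nearW => K.
exact: le_trans (ler_tcoef_tnorm _ _) (tnorm_wzS _ _ _).
Qed.

Lemma cvg_tcoef_col i : (fun N => tcoef (\sum_(0 <= n < N) wzG n 1 : T) i) @ \oo -->
  tcoef zeta_vec i.
Proof.
apply: (dist_le_cvg (b := geometric 18 (8 / 9))).
  by apply: cvg_geometric; rewrite ger0_norm; lra.
by move=> N /=; apply: tcoef_col_dist.
Qed.

End Convergence.

Theorem mainTheorem4 (R : realType) :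
  (fun N : nat => \prod_(1 <= n < N.+1) (Mmat n : 'M[R]_4)) @ \oo --> (Zmat : 'M[R]_4).
Proof.
rewrite (funext (@prod_Mmat R)) Zmat_toep.
exact: cvg_toep_mx (@cvg_tcoef_Ablk R) (@cvg_tcoef_col R).
Qed.
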